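(* $V_{\mathcal J}=M_r$; that is, the subspace of $M_r$ spanned by all vectors $L_r^{i_1j_1}(m_1)\cdots L_r^{i_pj_p}(m_p)\mathbf 1$ ($p\ge 0$, $1\le i_q,j_q\le d$, $m_q\in\mathbb Z$) is all of $M_r$.
   Context: Fix an integer $d\ge 2$ and $r\in\mathbb{C}$. Let $\hat{\mathfrak h}$ be the complex Lie algebra with basis $\{v^i(m)\mid 1\le i\le d,\ m\in\mathbb{Z}\}\cup\{\mathbf c\}$ and bracket $[v^i(m),v^j(n)]=\delta_{m+n,0}\delta_{i,j}\,m\,\mathbf c$, $[\mathbf c,\hat{\mathfrak h}]=0$. In $A=U(\hat{\mathfrak h})/\langle \mathbf c-1\rangle$ let $v^{ij}(m,n)$ be the image of $v^i(m)v^j(n)$; then $v^{ij}(m,n)=v^{ji}(n,m)$ unless $i=j$ and $m=-n$, and $v^{ii}(m,-m)=v^{ii}(-m,m)+m$. Let $\mathcal B=\{v^{ii}(m,n)\mid 1\le i\le d,\ m\le n\}\cup\{v^{ij}(m,n)\mid 1\le i<j\le d,\ m,n\in\mathbb Z\}$; then $\mathcal B\cup\{1\}$ is linearly independent, $\mathcal L:=\mathrm{span}_{\mathbb C}\mathcal B\oplus\mathbb C\subset A$ contains every $v^{ij}(m,n)$ and is closed under $[x,y]=xy-yx$. With $\pi_1,\pi_2$ the projections of $\mathcal L$ onto $\mathrm{span}\,\mathcal B$ and onto $\mathbb C$, $[x,y]_r=\pi_1([x,y])+r\pi_2([x,y])$ is a Lie bracket on $\mathcal L$; call this Lie algebra $\mathcal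 L_r$. Let $\mathcal B_+=\{v^{ij}(m,n)\in\mathcal B\mid m\ge 0\text{ or }n\ge 0\}$, $\mathcal B_-=\{v^{ij}(m,n)\in\mathcal B\mid m,n<0\}$, $\mathcal L_r^+=\mathrm{span}\,\mathcal B_+\oplus\mathbb C$, and $M_r=U(\mathcal L_r)\otimes_{U(\mathcal L_r^+)}\mathbb C\mathbf 1$, where $\mathcal B_+$ acts by $0$ on $\mathbf 1$ and $s\in\mathbb C\subset\mathcal L_r$ acts by the scalar $s$. Define operators on $M_r$: $L_r^{ij}(m)=\frac12\sum_{h\in\mathbb Z}v^{ij}(m-h,h)$ if $i\ne j$ or $m\ne0$, and $L_r^{ii}(0)=\frac12 v^{ii}(0,0)+\sum_{h>0}v^{ii}(-h,h)$ (on each vector only finitely many terms are nonzero). $V_{\mathcal J}$ denotes the span described in the claim. *)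

From mathcomp Require Import all_boot all_algebra.
From mathcomp Require Import Rstruct complex.
Set Implicit Arguments. Unset Strict Implicit. Unset Printing Implicit Defensive.
Import GRing.Theory Num.Theory.
Local Open Scope ring_scope.

Definition CC : fieldType := (Rdefinitions.R)[i].

Section Defs.
Variable d : nat.

(* Generators of the vector space L_r: [None] is the element 1 of C ⊂ L_r,
   [Some (i,j,m,n)] is v^{ij}(m,n).  Indices 1..d are represented by 'I_d. *)
Definition gen := option ('I_d * 'I_d * int * int).

Definition validg (g : gen) : bool :=
  match g with
  | None => true
  | Some (i, j, m, n) => (i < j)%N || ((i == j) && (m <= n))
  end.

Definition in_Bplus (g : gen) : bool :=
  match g with
  | None => false
  | Some (i, j, m, n) => validg g && ((0 <= m) || (0 <= n))
  end.

Definition word := seq gen.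
Definition valid_word (u : word) : bool := all validg u.

(* Elements of the tensor algebra T(L_r) (formal linear combinations of words;
   finite support is imposed where needed). *)
Definition vec := word -> CC.

(* Expansion of an arbitrary v^{ij}(m,n) (an element of L) in the basis B ∪ {1}:
   v^{ij}(m,n) = v^{ji}(n,m), and v^{ii}(m,n) = v^{ii}(n,m) + δ_{m+n,0} m. *)
Definition vnorm (i j : 'I_d) (m n : int) : seq (CC * gen) :=
  if (i < j)%N then [:: (1, Some (i, j, m, n))]
  else if (j < i)%N then [:: (1, Some (j, i, n, m))]
  else if m <= n then [:: (1, Some (i, j, m, n))]
  else (1, Some (i, j, n, m)) :: (if m + n == 0 then [:: (m%:~R, None)] else [::]).

Definition scl (c : CC) (s : seq (CC * gen)) := map (fun p => (c * p.1, p.2)) s.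
Definition condl (b : bool) (s : seq (CC * gen)) := if b then s else [::].

(* The commutator [x,y] = xy - yx computed in A, expanded in B ∪ {1}. *)
Definition rawbr (x y : gen) : seq (CC * gen) :=
  match x, y with
  | Some (i, j, a, b), Some (k, l, c, e) =>
      condl ((j == k) && (b + c == 0)) (scl b%:~R (vnorm i l a e)) ++
      condl ((j == l) && (b + e == 0)) (scl b%:~R (vnorm i k a c)) ++
      condl ((i == k) && (a + c == 0)) (scl a%:~R (vnorm l j e b)) ++
      condl ((i == l) && (a + e == 0)) (scl a%:~R (vnorm k j c b))
  | _, _ => [::]
  end.

(* The bracket [x,y]_r = π1([x,y]) + r π2([x,y]). *)
Definition brr (r : CC) (x y : gen) : seq (CC * gen) :=
  map (fun p => if p.2 is None then (r * p.1, None) else p) (rawbr x y).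

Definition delta (u : word) : vec := fun w => if w == u then 1 else 0.

Definition lin (u : word) (s : seq (CC * gen)) (v : word) : vec :=
  fun w => \sum_(p <- s) p.1 * delta (u ++ p.2 :: v) w.

(* Generators of the subspace J of T(L_r) with M_r = T(L_r)/J:
   the two-sided ideal of U(L_r) relations, plus the left ideal generated by
   B_+ and by (1_L - 1). *)
Definition Jgen (r : CC) (t : vec) : Prop :=
  (exists u v x y, [/\ valid_word u, valid_word v, validg x, validg y &
     forall w, t w = delta (u ++ x :: y :: v) w - delta (u ++ y :: x :: v) w
                     - lin u (brr r x y) v w])
  \/ (exists u b, [/\ valid_word u, in_Bplus b & forall w, t w = delta (rcons u b) w])
  \/ (exists u, valid_word u /\ forall w, t w = delta (rcons u None) w - delta u w).

Definition InJ (r : CC) (t : vec) : Prop :=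
  exists (n : nat) (c : nat -> CC) (x : nat -> vec),
    (forall k, (k < n)%N -> Jgen r (x k)) /\
    forall w, t w = \sum_(k < n) c k * x k w.

Definition lmulg (g : gen) (t : vec) : vec :=
  fun w => match w with
           | g' :: w' => if g' == g then t w' else 0
           | [::] => 0
           end.

Definition vmul (i j : 'I_d) (m n : int) (t : vec) : vec :=
  fun w => \sum_(p <- vnorm i j m n) p.1 * lmulg p.2 t w.

(* Truncation at level N of the operator L_r^{ij}(m). *)
Definition Lop (N : nat) (q : 'I_d * 'I_d * int) (t : vec) : vec :=
  fun w =>
    match q with
    | (i, j, m) =>
      if (i == j) && (m == 0) then
        2^-1 * vmul i i 0 0 t w
        + \sum_(k < N) vmul i i (- (k.+1)%:Z) (k.+1)%:Z t w
      else
        2^-1 * \sum_(k < (2 * N).+1)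
                 vmul i j (m - (k%:Z - N%:Z)) (k%:Z - N%:Z) t w
    end.

(* LMono r qs u : the class of u in M_r equals
   L_r^{i_1 j_1}(m_1) ... L_r^{i_p j_p}(m_p) 1, where qs = [(i_1,j_1,m_1); ...].
   The infinite sum defining L_r^{ij}(m) is realized as the eventually constant
   (modulo J) value of its truncations. *)
Inductive LMono (r : CC) : seq ('I_d * 'I_d * int) -> vec -> Prop :=
| LMono0 u : InJ r (fun w => u w - delta [::] w) -> LMono r [::] u
| LMonoS q qs v u : LMono r qs v ->
    (exists N0 : nat, forall N, (N0 <= N)%N -> InJ r (fun w => u w - Lop N q v w)) ->
    LMono r (q :: qs) u.

End Defs.

From mathcomp Require Import all_boot all_order all_algebra zify ring.
From mathcomp Require Import Rstruct complex.
From Stdlib Require Import FunctionalExtensionality.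
Set Implicit Arguments. Unset Strict Implicit. Unset Printing Implicit Defensive.
Import Order.TTheory GRing.Theory Num.Theory.
Local Open Scope ring_scope.

(* The quotient [M_r] is [T(L_r)] modulo [J], so it suffices to show, by induction on
   the length, that every word [x Y] of basis letters lies in [V_J + J], assuming this for
   all shorter words.  If [x] is in [B_+] or is [1], commute it to the right, where it acts
   by its scalar; only shorter words remain.  If [x = v^{kl}(a, b)] with [k < l] and
   [a, b < 0], apply [L_r^{kl}(a + b)] to [Y]: it preserves [V_J + J], because its
   truncations stabilise modulo [J] on each word (letters with a mode beyond those of [Y]
   annihilate [Y]), and up to shorter words it equals [1/2 sum_j v^{kl}(a + b + j, -j) Y]
   over the splittings with both modes negative.  Bracketing with [L_r^{kk}(0)] multiplies
   the term [v^{kl}(x, y) Y] by [-x] and again preserves [V_J + J] up to shorter words, so a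
   Lagrange polynomial in it isolates [v^{kl}(a, b) Y].  A diagonal letter [v^{jj}(c, e)]
   comes from [v^{kl}(c, e)], for some [k < l] with [j] among them (here [d >= 2] is
   used), by bracketing with [L_r^{kl}(0)] and then with [L_r^{jj}(0)]. *)

Local Notation letters s := [seq p.2 | p <- s].

Section Span.
Variables (T : Type) (R : pzRingType).
Implicit Types (P Q : (T -> R) -> Prop) (a b t : T -> R).

Definition vadd a b : T -> R := fun w => a w + b w.
Definition vscal (c : R) a : T -> R := fun w => c * a w.
Definition vzero : T -> R := fun _ => 0.

Inductive span P : (T -> R) -> Prop :=
 | span_gen t : P t -> span P t
 | span0 : span P vzero
 | spanD a b : span P a -> span P b -> span P (vadd a b)
 | spanZ c a : span P a -> span P (vscal c a).

Definition lincomb P t : Prop :=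
  exists n (c : nat -> R) (x : nat -> T -> R),
    (forall k, (k < n)%N -> P (x k)) /\ forall w, t w = \sum_(k < n) c k * x k w.

Lemma span_eq P a b : span P a -> (forall w, a w = b w) -> span P b.
Proof. by move=> Pa eq_ab; rewrite (_ : b = a) //; apply: functional_extensionality. Qed.

Lemma span_add P a b : span P a -> span P b -> span P (fun w => a w + b w).
Proof. exact: spanD. Qed.

Lemma span_scale P c a : span P a -> span P (fun w => c * a w).
Proof. exact: spanZ. Qed.

Lemma span_sub P a b : span P a -> span P b -> span P (fun w => a w - b w).
Proof.
by move=> Pa Pb; apply: span_eq (spanD Pa (spanZ (-1) Pb)) _ => w; rewrite /vadd /vscal mulN1r.
Qed.

Lemma span_trans P Q t : (forall u, P u -> span Q u) -> span P t -> span Q t.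
Proof. by move=> PQ; elim=> [u /PQ||a b _ + _|c a _]; [|exact: span0|exact: spanD|exact: spanZ]. Qed.

Lemma span_sum P (I : eqType) (s : seq I) (c : I -> R) (F : I -> T -> R) :
  (forall i, i \in s -> span P (F i)) -> span P (fun w => \sum_(i <- s) c i * F i w).
Proof.
elim: s => [|i s IH] Fs; first by apply: span_eq (span0 P) _ => w; rewrite big_nil.
apply: span_eq (spanD (spanZ (c i) (Fs i (mem_head _ _))) (IH _)) _ => [j js|w].
  by apply: Fs; rewrite in_cons js orbT.
by rewrite /vadd /vscal big_cons.
Qed.

Lemma lincomb_span P t : lincomb P t -> span P t.
Proof.
case=> n [c [x [Px e]]].
have := @span_sum P _ (index_enum 'I_n) (fun k => c k) (fun k => x k).
by move=> /(_ (fun k _ => span_gen (Px k (ltn_ord k)))) /span_eq; apply => w; rewrite e.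
Qed.

Lemma lincomb_cat P a b :
  lincomb P a -> lincomb P b -> lincomb P (vadd a b).
Proof.
move=> [n1 [c1 [x1 [P1 e1]]]] [n2 [c2 [x2 [P2 e2]]]].
pose glue (T' : Type) (f1 f2 : nat -> T') k := if (k < n1)%N then f1 k else f2 (k - n1)%N.
exists (n1 + n2)%N, (glue _ c1 c2), (glue _ x1 x2); split.
  by move=> k lt_k; rewrite /glue; case: ifP => [/P1//|/negbT]; rewrite -leqNgt => le_k; apply: P2; lia.
move=> w; rewrite /vadd e1 e2 big_split_ord /glue; congr (_ + _).
  by apply: eq_bigr => k _; rewrite /= ltn_ord.
by apply: eq_bigr => k _; rewrite /= ltnNge leq_addr addKn.
Qed.

Lemma span_lincomb P t : span P t -> lincomb P t.
Proof.
elim=> [u Pu||a b _ + _|c a _ [n [c1 [x [Px e]]]]]; last 1 first.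
- exists n, (fun k => c * c1 k), x; split => // w.
  by rewrite /vscal e mulr_sumr; apply: eq_bigr => k _; rewrite mulrA.
- exists 1%N, (fun _ => 1), (fun _ => u); split => // w.
  by rewrite big_ord1 mul1r.
- exists 0%N, (fun _ => 0), (fun _ => vzero); split => // w.
  by rewrite big_ord0.
- exact: lincomb_cat.
Qed.

Lemma span_or_split P Q t : span (fun u => P u \/ Q u) t ->
  exists2 a, span P a & span Q (fun w => t w - a w).
Proof.
elim=> [u [Pu|Qu]||a b _ [a1 Pa1 Qa] _ [b1 Pb1 Qb]|c a _ [a1 Pa1 Qa]].
- by exists u; [exact: span_gen | apply: span_eq (span0 Q) _ => w; rewrite subrr].
- by exists vzero; [exact: span0 | apply: span_eq (span_gen Qu) _ => w; rewrite subr0].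
- by exists vzero; [exact: span0 | apply: span_eq (span0 Q) _ => w; rewrite subr0].
- exists (vadd a1 b1); first exact: spanD.
  by apply: span_eq (spanD Qa Qb) _ => w; rewrite /vadd opprD addrACA.
- exists (vscal c a1); first exact: spanZ.
  by apply: span_eq (spanZ c Qa) _ => w; rewrite /vscal mulrBr.
Qed.

End Span.

Lemma fin_choice (A : Type) (a0 : A) (Q : nat -> A -> Prop) n :
  (forall k, (k < n)%N -> exists a, Q k a) -> exists f : nat -> A, forall k, (k < n)%N -> Q k (f k).
Proof.
elim: n => [|n IH] ex_Q; first by exists (fun _ => a0).
have [f Qf] := IH (fun k lt_k => ex_Q k (ltnW lt_k)).
have [a Qa] := ex_Q n (ltnSn n).
exists (fun k => if k == n then a else f k) => k; rewrite ltnS leq_eqVlt.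
by case: eqP => [-> //|_ /= /Qf].
Qed.

Section WordAlgebra.
Variables (d : nat) (r : CC).
Local Notation vec := (vec d).
Local Notation gen := (gen d).
Local Notation word := (word d).
Local Notation vzero := (@vzero word CC).
Implicit Types (g x y : gen) (u v w Y : word) (s : seq (CC * gen)) (t a b : vec).

Definition Jspan : vec -> Prop := span (Jgen r).

Lemma InJ_Jspan t : InJ r t -> Jspan t.
Proof. exact: lincomb_span. Qed.

Lemma Jspan_InJ t : Jspan t -> InJ r t.
Proof. exact: span_lincomb. Qed.

Lemma delta_cons_nil x u : delta (x :: u) [::] = 0.
Proof. by []. Qed.

Lemma delta_cons x y u w : delta (x :: u) (y :: w) = if y == x then delta u w else 0.
Proof. by rewrite /delta eqseq_cons; case: (y == x). Qed.

Lemma lin_cons_nil g u s v : lin (g :: u) s v [::] = 0.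
Proof. by rewrite /lin big1 // => p _; rewrite mulr0. Qed.

Lemma lin_cons g y u s v w : lin (g :: u) s v (y :: w) = if y == g then lin u s v w else 0.
Proof.
rewrite /lin; case: eqP => [->|ne].
  by apply: eq_bigr => p _; rewrite delta_cons eqxx.
by rewrite big1 // => p _; rewrite delta_cons; case: eqP => // _; rewrite mulr0.
Qed.

Lemma lin_nilE s Y : lin [::] s Y = (fun w => \sum_(p <- s) p.1 * delta (p.2 :: Y) w).
Proof. by []. Qed.

Lemma lin_cat u s1 s2 v : lin u (s1 ++ s2) v = vadd (lin u s1 v) (lin u s2 v).
Proof. by apply: functional_extensionality => w; rewrite /lin /vadd big_cat. Qed.

Lemma lin_scl u c s v : lin u (scl c s) v = vscal c (lin u s v).
Proof.
apply: functional_extensionality => w; rewrite /lin /vscal /scl big_map mulr_sumr.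
by apply: eq_bigr => p _; rewrite mulrA.
Qed.

Lemma lin_nil u v : lin u [::] v = vzero.
Proof. by apply: functional_extensionality => w; rewrite /lin big_nil. Qed.

Lemma lin_one u c g v : lin u [:: (c, g)] v = vscal c (delta (u ++ g :: v)).
Proof. by apply: functional_extensionality => w; rewrite /lin big_seq1. Qed.

Lemma lin_two (p q : CC * gen) Y w :
  lin [::] [:: p; q] Y w = lin [::] [:: p] Y w + lin [::] [:: q] Y w.
Proof. by rewrite /lin !big_cons !big_nil !addr0. Qed.

Lemma lmulg_delta g u : lmulg g (delta u) = delta (g :: u).
Proof. by apply: functional_extensionality => -[|y w] //=; rewrite delta_cons. Qed.

Lemma lmulg_lin g u s v : lmulg g (lin u s v) = lin (g :: u) s v.
Proof. by apply: functional_extensionality => -[|y w] /=; rewrite ?lin_cons_nil ?lin_cons. Qed.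

Lemma lmulg_vadd g a b : lmulg g (vadd a b) = vadd (lmulg g a) (lmulg g b).
Proof.
apply: functional_extensionality => -[|y w] /=; rewrite /vadd /= ?addr0 //.
by case: ifP; rewrite ?addr0.
Qed.

Lemma lmulg_vscal g c a : lmulg g (vscal c a) = vscal c (lmulg g a).
Proof.
apply: functional_extensionality => -[|y w] /=; rewrite /vscal /= ?mulr0 //.
by case: ifP; rewrite ?mulr0.
Qed.

Lemma lmulg_vzero g : lmulg g vzero = vzero.
Proof. by apply: functional_extensionality => -[|y w] //=; case: ifP. Qed.

Lemma Jgen_lmulg g t : validg g -> Jgen r t -> Jgen r (lmulg g t).
Proof.
move=> vg [[u [v [x [y [vu vv vx vy ht]]]]]|[[u [b [vu hb ht]]]|[u [vu ht]]]].
- left; exists (g :: u), v, x, y; split => //=; first by rewrite vg.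
  move=> -[|z w] /=; first by rewrite !delta_cons_nil lin_cons_nil !subr0.
  by rewrite !delta_cons lin_cons; case: eqP => _; rewrite ?ht ?subr0.
- right; left; exists (g :: u), b; split => //=; first by rewrite vg.
  by move=> -[|z w] /=; rewrite ?delta_cons ?ht.
- right; right; exists (g :: u); split => /=; first by rewrite vg.
  move=> -[|z w] /=; first by rewrite !delta_cons_nil subr0.
  by rewrite !delta_cons; case: eqP => _; rewrite ?ht ?subr0.
Qed.

Lemma Jspan_lmulg g t : validg g -> Jspan t -> Jspan (lmulg g t).
Proof.
move=> vg; elim=> [u /(Jgen_lmulg vg) /span_gen //||a b _ + _|c a _].
- by rewrite lmulg_vzero; apply: span0.
- by rewrite lmulg_vadd; apply: spanD.
- by rewrite lmulg_vscal; apply: spanZ.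
Qed.

Lemma Jspan_comm u x y Y : valid_word u -> validg x -> validg y -> valid_word Y ->
  Jspan (fun w => delta (u ++ x :: y :: Y) w - delta (u ++ y :: x :: Y) w - lin u (brr r x y) Y w).
Proof. by move=> vu vx vy vY; apply: span_gen; left; exists u, Y, x, y; split. Qed.

Definition lmul s t : vec := fun w => \sum_(p <- s) p.1 * lmulg p.2 t w.

Lemma vmul_lmul (i j : 'I_d) m n t : vmul i j m n t = lmul (vnorm i j m n) t.
Proof. by []. Qed.

Lemma lmul_delta s u : lmul s (delta u) = lin [::] s u.
Proof.
apply: functional_extensionality => w; rewrite /lmul /lin.
by apply: eq_bigr => p _; rewrite lmulg_delta.
Qed.

Lemma lmul_vadd s a b : lmul s (vadd a b) = vadd (lmul s a) (lmul s b).
Proof.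
apply: functional_extensionality => w; rewrite /lmul /vadd -big_split.
by apply: eq_bigr => p _; rewrite lmulg_vadd /vadd mulrDr.
Qed.

Lemma lmul_vscal s c a : lmul s (vscal c a) = vscal c (lmul s a).
Proof.
apply: functional_extensionality => w; rewrite /lmul /vscal mulr_sumr.
by apply: eq_bigr => p _; rewrite lmulg_vscal /vscal mulrCA.
Qed.

Lemma lmul_vzero s : lmul s vzero = vzero.
Proof.
apply: functional_extensionality => w; rewrite /lmul /vzero big1 // => p _.
by rewrite lmulg_vzero /vzero mulr0.
Qed.

Lemma lmul_sub s a b : lmul s (fun w => a w - b w) = (fun w => lmul s a w - lmul s b w).
Proof.
have -> : (fun w => a w - b w) = vadd a (vscal (-1) b).
  by apply: functional_extensionality => w; rewrite /vadd /vscal mulN1r.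
rewrite lmul_vadd lmul_vscal; apply: functional_extensionality => w.
by rewrite /vadd /vscal mulN1r.
Qed.

Lemma lmul_cat s1 s2 t : lmul (s1 ++ s2) t = vadd (lmul s1 t) (lmul s2 t).
Proof. by apply: functional_extensionality => w; rewrite /lmul /vadd big_cat. Qed.

Lemma lmul_scl c s t : lmul (scl c s) t = vscal c (lmul s t).
Proof.
apply: functional_extensionality => w; rewrite /lmul /vscal /scl big_map mulr_sumr.
by apply: eq_bigr => p _; rewrite mulrA.
Qed.

Lemma Jspan_lmul s t : all (@validg d) (letters s) -> Jspan t -> Jspan (lmul s t).
Proof.
move=> /allP vs Jt; apply: span_sum => p ps; apply: Jspan_lmulg Jt.
exact/vs/map_f.
Qed.

Lemma vnorm_lt (i j : 'I_d) m n : (i < j)%N -> vnorm i j m n = [:: (1, Some (i, j, m, n))].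
Proof. by rewrite /vnorm => ->. Qed.

Lemma vnorm_gt (i j : 'I_d) m n : (j < i)%N -> vnorm i j m n = [:: (1, Some (j, i, n, m))].
Proof. by rewrite /vnorm => lt_ji; rewrite lt_ji ltnNge ltnW. Qed.

Lemma vnorm_le (i : 'I_d) m n : m <= n -> vnorm i i m n = [:: (1, Some (i, i, m, n))].
Proof. by rewrite /vnorm ltnn => ->. Qed.

Lemma vnorm_gtn (i : 'I_d) m n : n < m ->
  vnorm i i m n = (1, Some (i, i, n, m)) :: (if m + n == 0 then [:: (m%:~R, None)] else [::]).
Proof. by rewrite /vnorm ltnn => /lt_geF ->. Qed.

Lemma ord_eq_nltn (i j : 'I_d) : ~~ (i < j)%N -> ~~ (j < i)%N -> i = j.
Proof. by move=> h1 h2; apply: val_inj => /=; lia. Qed.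

Lemma ord_ltn_eqF (i j : 'I_d) : (i < j)%N -> (i == j) = false.
Proof. exact: ltn_eqF. Qed.

Lemma ord_gtn_eqF (i j : 'I_d) : (i < j)%N -> (j == i) = false.
Proof. exact: gtn_eqF. Qed.

Lemma letters_scl c s : letters (scl c s) = letters s.
Proof. by rewrite /scl -map_comp. Qed.

Lemma vnorm_valid i j m n : all (@validg d) (letters (vnorm i j m n)).
Proof.
case: (ltnP i j) => hij; first by rewrite vnorm_lt //= hij.
case: (ltnP j i) => hji; first by rewrite vnorm_gt //= hji.
have e : i = j by apply: ord_eq_nltn; rewrite -leqNgt.
subst j; case: (lerP m n) => hmn; first by rewrite vnorm_le //= eqxx hmn orbT.
by rewrite vnorm_gtn //= eqxx (ltW hmn) orbT /=; case: ifP.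
Qed.

Lemma letters_brr x y : letters (brr r x y) = letters (rawbr x y).
Proof. by rewrite /brr -map_comp; apply: eq_map => -[c [g|]]. Qed.

Lemma brr_valid x y : all (@validg d) (letters (brr r x y)).
Proof.
rewrite letters_brr; case: x => [[[[i j] a] b]|]; case: y => [[[[k l] c] e]|] //=.
rewrite !map_cat !all_cat /condl.
by repeat (case: ifP => _; rewrite ?letters_scl ?vnorm_valid //=).
Qed.

End WordAlgebra.

Section TruncatedL.
Variables (d : nat) (r : CC).
Local Notation vec := (vec d).
Local Notation gen := (gen d).
Local Notation word := (word d).
Local Notation vzero := (@vzero word CC).
Local Notation Jspan := (Jspan r).
Implicit Types (g y : gen) (w Y : word) (t a b : vec).

Definition Lbase (q : 'I_d * 'I_d * int) : seq (CC * gen) :=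
  let: (i, j, m) := q in
  if (i == j) && (m == 0) then scl 2^-1 (vnorm i i 0 0) else scl 2^-1 (vnorm i j m 0).

Definition Lstep (N : nat) (q : 'I_d * 'I_d * int) : seq (CC * gen) :=
  let: (i, j, m) := q in
  if (i == j) && (m == 0) then vnorm i i (- (N.+1)%:Z) (N.+1)%:Z
  else scl 2^-1 (vnorm i j (m + (N.+1)%:Z) (- (N.+1)%:Z) ++ vnorm i j (m - (N.+1)%:Z) (N.+1)%:Z).

Fixpoint Lterms (N : nat) q : seq (CC * gen) :=
  if N is N'.+1 then Lterms N' q ++ Lstep N' q else Lbase q.

Lemma Lbase_generic (i j : 'I_d) m : ~~ ((i == j) && (m == 0)) ->
  Lbase (i, j, m) = scl 2^-1 (vnorm i j m 0).
Proof. by rewrite /Lbase => /negbTE ->. Qed.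

Lemma Lstep_generic N (i j : 'I_d) m : ~~ ((i == j) && (m == 0)) ->
  Lstep N (i, j, m)
  = scl 2^-1 (vnorm i j (m + (N.+1)%:Z) (- (N.+1)%:Z) ++ vnorm i j (m - (N.+1)%:Z) (N.+1)%:Z).
Proof. by rewrite /Lstep => /negbTE ->. Qed.

Lemma Lterms0 q : Lterms 0 q = Lbase q.
Proof. by []. Qed.

Lemma LtermsS N q : Lterms N.+1 q = Lterms N q ++ Lstep N q.
Proof. by []. Qed.

Lemma Lop0 q t : Lop 0 q t = lmul (Lbase q) t.
Proof.
case: q => [[i j] m]; apply: functional_extensionality => w.
rewrite /Lop /Lbase; case: ifP => _; first by rewrite big_ord0 addr0 lmul_scl.
by rewrite big_ord1 lmul_scl /vscal /= subr0 subrr.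
Qed.

Lemma LopS N q t : Lop N.+1 q t = vadd (Lop N q t) (lmul (Lstep N q) t).
Proof.
case: q => [[i j] m]; apply: functional_extensionality => w.
rewrite /Lop /Lstep /vadd; case: ifP => _; first by rewrite big_ord_recr addrA.
rewrite lmul_scl lmul_cat /vscal /vadd -!vmul_lmul.
rewrite (_ : (2 * N.+1).+1 = ((2 * N).+1).+2) ?mulnS // big_ord_recl big_ord_recr /=.
have shift : forall k : 'I_(2 * N).+1, vmul i j (m - ((bump 0 (widen_ord (leqnSn _) k))%:Z - (N.+1)%:Z))
     ((bump 0 (widen_ord (leqnSn _) k))%:Z - (N.+1)%:Z) t w
   = vmul i j (m - (k%:Z - N%:Z)) (k%:Z - N%:Z) t w.
  by move=> k; congr (vmul _ _ _ _ _ _); rewrite /bump /=; lia.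
rewrite (eq_bigr _ (fun k _ => shift k)) !mulrDr addrCA /bump /=.
by congr (_ + (_ + _)); congr (_ * vmul _ _ _ _ _ _); lia.
Qed.

Lemma Lop_lmul N q t : Lop N q t = lmul (Lterms N q) t.
Proof. by elim: N => [|N IH]; rewrite ?Lop0 // LopS IH LtermsS lmul_cat. Qed.

Lemma Lop_vadd N q a b : Lop N q (vadd a b) = vadd (Lop N q a) (Lop N q b).
Proof. by rewrite !Lop_lmul lmul_vadd. Qed.

Lemma Lop_vscal N q c a : Lop N q (vscal c a) = vscal c (Lop N q a).
Proof. by rewrite !Lop_lmul lmul_vscal. Qed.

Lemma Lop_vzero N q : Lop N q vzero = vzero.
Proof. by rewrite !Lop_lmul lmul_vzero. Qed.

Lemma Lop_sub N q a b : Lop N q (fun w => a w - b w) = (fun w => Lop N q a w - Lop N q b w).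
Proof. by rewrite !Lop_lmul lmul_sub. Qed.

Lemma Lterms_valid N q : all (@validg d) (letters (Lterms N q)).
Proof.
case: q => [[i j] m]; elim: N => [|N IH] /=.
  by rewrite /Lbase; case: ifP => _; rewrite letters_scl vnorm_valid.
rewrite map_cat all_cat IH /Lstep; case: ifP => _; first exact: vnorm_valid.
by rewrite letters_scl map_cat all_cat !vnorm_valid.
Qed.

Lemma Jspan_Lop N q t : Jspan t -> Jspan (Lop N q t).
Proof. by rewrite Lop_lmul; apply: Jspan_lmul; exact: Lterms_valid. Qed.

Definition in_Bplus1 g : bool := (g == None) || in_Bplus g.

Lemma vnorm_Bplus1 (i j : 'I_d) m n : (0 <= m) || (0 <= n) ->
  all in_Bplus1 (letters (vnorm i j m n)).
Proof.
move=> mn_ge0; have := vnorm_valid i j m n; rewrite /in_Bplus1 /in_Bplus.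
case: (ltnP i j) => hij; first by rewrite vnorm_lt //= hij /= mn_ge0.
case: (ltnP j i) => hji; first by rewrite vnorm_gt //= hji /= orbC mn_ge0.
have e : i = j by apply: ord_eq_nltn; rewrite -leqNgt.
subst j; case: (lerP m n) => hmn; first by rewrite vnorm_le //= => /andP[-> _]; rewrite mn_ge0.
rewrite vnorm_gtn //= => /andP[-> _] /=; rewrite orbC mn_ge0.
by case: ifP.
Qed.

Lemma Lterms0_Bplus1 N (i j : 'I_d) : all in_Bplus1 (letters (Lterms N (i, j, 0))).
Proof.
elim: N => [|N IH] /=.
  by rewrite /Lbase; case: ifP => _; rewrite letters_scl vnorm_Bplus1.
rewrite map_cat all_cat IH /Lstep; case: ifP => _; first by apply: vnorm_Bplus1; lia.
by rewrite letters_scl map_cat all_cat !vnorm_Bplus1 //; lia.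
Qed.

Definition bounded (M : int) g : bool :=
  if g is Some (_, _, a, b) then (- M <= a <= M) && (- M <= b <= M) else true.

Definition beyond (M : int) g : bool :=
  if g is Some (_, _, a, b) then (M < a) || (M < b) else false.

Lemma vnorm_beyond M (i j : 'I_d) m n : (M < m) || (M < n) -> (i != j) || (m <= n) || (m + n != 0) ->
  all (beyond M) (letters (vnorm i j m n)).
Proof.
move=> Mmn no_unit.
case: (ltnP i j) => hij; first by rewrite vnorm_lt //= Mmn.
case: (ltnP j i) => hji; first by rewrite vnorm_gt //= orbC Mmn.
have e : i = j by apply: ord_eq_nltn; rewrite -leqNgt.
subst j; case: (lerP m n) => hmn; first by rewrite vnorm_le //= Mmn.
rewrite vnorm_gtn //= orbC Mmn /=.
by move: no_unit; rewrite eqxx /=; case: ifP => //; lia.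
Qed.

Lemma brr_beyond M g y : beyond M g -> bounded M y -> all (beyond M) (letters (brr r g y)).
Proof.
rewrite letters_brr.
case: g => [[[[i j] a] b]|] //; case: y => [[[[k l] c] e]|] //= Mab /andP[Mc Me].
rewrite !map_cat !all_cat /condl.
by apply/and4P; split; case: ifP => //= /andP[_ /eqP h];
  rewrite letters_scl; (apply: vnorm_beyond; [lia | apply/orP; right; lia]).
Qed.

Lemma exists_bound Y : exists M, 0 <= M /\ all (bounded M) Y.
Proof.
elim: Y => [|y Y [M [M0 hM]]]; first by exists 0.
case: y => [[[[i j] a] b]|]; last by exists M.
exists (M + (absz a)%:Z + (absz b)%:Z); split; first lia.
apply/andP; split; first by apply/andP; split; lia.
apply/allP => g gY; move/allP: hM => /(_ g gY).
by case: g {gY} => [[[[k l] x] z]|] //=; lia.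
Qed.

(* A generator with a mode beyond the bound of Y, commuted to the right, meets [1]
   inside [B_+]; the brackets created on the way are again beyond the bound. *)
Lemma Jspan_beyond M Y : 0 <= M -> valid_word Y -> all (bounded M) Y ->
  forall g, validg g -> beyond M g -> Jspan (delta (g :: Y)).
Proof.
move=> M0; elim: Y => [|y Y IH] vY bY g vg bg.
  apply: span_gen; right; left; exists [::], g; split => //.
  by move: vg bg; rewrite /in_Bplus; case: g => [[[[i j] a] b]|] //= -> /=; lia.
move: vY bY => /= /andP[vy vY] /andP[hby bY].
have J1 := @Jspan_comm d r [::] g y Y isT vg vy vY.
have J2 : Jspan (delta (y :: g :: Y)) by rewrite -lmulg_delta; apply: Jspan_lmulg => //; apply: IH.
have J3 : Jspan (lin [::] (brr r g y) Y).
  rewrite lin_nilE; apply: span_sum => p ps; apply: IH => //.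
    by move/allP: (brr_valid r g y); apply; apply: map_f.
  by move/allP: (brr_beyond bg hby); apply; apply: map_f.
by apply: span_eq (span_add (span_add J1 J2) J3) _ => w /=; ring.
Qed.

Definition Lstable t : Prop :=
  forall q, exists N0, forall N, (N0 <= N)%N -> Jspan (fun w => Lop N q t w - Lop N0 q t w).

Lemma Lstep_beyond M N (i j : 'I_d) m : 0 <= M -> (absz M + absz m < N.+1)%N ->
  all (beyond M) (letters (Lstep N (i, j, m))).
Proof.
move=> M0 hN; rewrite /Lstep; case: ifP => hd.
  by apply: vnorm_beyond; [lia | apply/orP; left; apply/orP; right; lia].
rewrite letters_scl map_cat all_cat; apply/andP; split; apply: vnorm_beyond; try lia;
  move: hd; case: (i == j) => //= hm; apply/orP; right; lia.
Qed.

(* Once [N] exceeds [M + |m|], every new term of the truncation has a mode beyond the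
   bound [M] of [Y]. *)
Lemma Lstable_delta Y : valid_word Y -> Lstable (delta Y).
Proof.
move=> vY [[i j] m]; have [M [M0 hM]] := exists_bound Y.
exists (absz M + absz m).+1 => N; elim: N => [|N IH] //.
rewrite leq_eqVlt => /orP[/eqP <-|hN].
  by apply: span_eq (span0 _) _ => w; rewrite /vzero subrr.
have J1 := IH hN; rewrite LopS.
have J2 : Jspan (lmul (Lstep N (i, j, m)) (delta Y)).
  rewrite lmul_delta lin_nilE; apply: span_sum => p ps.
  have pv : validg p.2.
    have := Lterms_valid N.+1 (i, j, m); rewrite /= map_cat all_cat => /andP[_ /allP]; apply.
    exact: map_f.
  apply: (Jspan_beyond M0 vY hM pv).
  have lt_N : (absz M + absz m < N.+1)%N by lia.
  by move/allP: (Lstep_beyond i j M0 lt_N); apply; apply: map_f.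
by apply: span_eq (span_add J1 J2) _ => w; rewrite /vadd; ring.
Qed.

End TruncatedL.

Section Lowering.
Variables (d : nat) (r : CC).
Local Notation vec := (vec d).
Local Notation gen := (gen d).
Local Notation word := (word d).
Local Notation vzero := (@vzero word CC).
Local Notation Jspan := (Jspan r).
Local Notation Lstable := (Lstable r).
Implicit Types (g y : gen) (w Y : word) (s A : seq (CC * gen)) (t a b u : vec).

Definition wspan : vec -> Prop := span (fun z => exists w, valid_word w /\ z = delta w).

Definition wspan_le k : vec -> Prop :=
  span (fun z => exists w, [/\ valid_word w, (size w <= k)%N & z = delta w]).

(* Vectors of [T(L_r)] whose class in [M_r] lies in [V_J]. *)
Definition VJ : vec -> Prop := span (fun z => (exists qs, LMono r qs z) \/ Jgen r z).

Lemma VJ_Jspan t : Jspan t -> VJ t.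
Proof. by apply: span_trans => u Ju; apply: span_gen; right. Qed.

Lemma Jspan_sym a b : Jspan (fun w => a w - b w) -> Jspan (fun w => b w - a w).
Proof. by move=> J; apply: span_eq (span_scale (-1) J) _ => w; ring. Qed.

Lemma VJ_Jeq a b : VJ a -> Jspan (fun w => a w - b w) -> VJ b.
Proof. by move=> Va J; apply: span_eq (span_sub Va (VJ_Jspan J)) _ => w; ring. Qed.

Lemma VJ_Jeq' a b : VJ a -> Jspan (fun w => b w - a w) -> VJ b.
Proof. by move=> Va /Jspan_sym; apply: VJ_Jeq. Qed.

Lemma wspan_lmul s t : all (@validg d) (letters s) -> wspan t -> wspan (lmul s t).
Proof.
move=> /allP vs; elim=> [u [w [vw ->]]||a b _ + _|c a _].
- rewrite lmul_delta lin_nilE; apply: span_sum => p ps.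
  by apply: span_gen; exists (p.2 :: w); rewrite /= vw vs ?andbT //; apply: map_f.
- by rewrite lmul_vzero; apply: span0.
- by rewrite lmul_vadd; apply: spanD.
- by rewrite lmul_vscal; apply: spanZ.
Qed.

Lemma wspan_Lop N q t : wspan t -> wspan (Lop N q t).
Proof. by rewrite Lop_lmul; apply: wspan_lmul; apply: Lterms_valid. Qed.

Lemma Lstable_Jspan t : Jspan t -> Lstable t.
Proof. by move=> Jt q; exists 0%N => N _; apply: span_sub; apply: Jspan_Lop. Qed.

Lemma Lstable_vadd a b : Lstable a -> Lstable b -> Lstable (vadd a b).
Proof.
move=> Sa Sb q; have [Na Ha] := Sa q; have [Nb Hb] := Sb q.
exists (maxn Na Nb) => N le_N; rewrite !Lop_vadd.
have J1 := Ha N (leq_trans (leq_maxl _ _) le_N).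
have J2 := Ha (maxn Na Nb) (leq_maxl _ _).
have J3 := Hb N (leq_trans (leq_maxr _ _) le_N).
have J4 := Hb (maxn Na Nb) (leq_maxr _ _).
by apply: span_eq (span_sub (span_add J1 J3) (span_add J2 J4)) _ => w; rewrite /vadd; ring.
Qed.

Lemma Lstable_vscal c a : Lstable a -> Lstable (vscal c a).
Proof.
move=> Sa q; have [Na Ha] := Sa q; exists Na => N le_N; rewrite !Lop_vscal.
by apply: span_eq (span_scale c (Ha N le_N)) _ => w; rewrite /vscal; ring.
Qed.

Lemma Lstable_wspan t : wspan t -> Lstable t.
Proof.
elim=> [u [w [vw ->]]||a b _ + _|c a _]; first exact: Lstable_delta.
- exact/Lstable_Jspan/span0.
- exact: Lstable_vadd.
- exact: Lstable_vscal.
Qed.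

Lemma Lstable_Jeq a b : Lstable b -> Jspan (fun w => a w - b w) -> Lstable a.
Proof.
move=> Sb Jab q; have [N0 H] := Sb q; exists N0 => N le_N.
have J1 := Jspan_Lop N q Jab; have J2 := Jspan_Lop N0 q Jab; rewrite !Lop_sub in J1 J2.
by apply: span_eq (span_add (H N le_N) (span_sub J1 J2)) _ => w; ring.
Qed.

Lemma LMono_wspan qs u : LMono r qs u -> exists2 f, wspan f & Jspan (fun w => u w - f w).
Proof.
elim=> [u0 /InJ_Jspan J0|q qs0 v u0 _ [f wf Jvf] [N0 JN]].
  by exists (delta [::]); first by apply: span_gen; exists [::].
exists (Lop N0 q f); first exact: wspan_Lop.
have J1 := InJ_Jspan (JN N0 (leqnn _)).
have J2 := Jspan_Lop N0 q Jvf; rewrite Lop_sub in J2.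
by apply: span_eq (span_add J1 J2) _ => w; ring.
Qed.

Lemma Lstable_LMono qs u : LMono r qs u -> Lstable u.
Proof. by case/LMono_wspan=> f /Lstable_wspan; apply: Lstable_Jeq. Qed.

(* The truncations of [L_r^q] eventually map [VJ] into itself: on an [L]-monomial they
   stabilise modulo [J], and the stable value is by definition a longer [L]-monomial. *)
Lemma VJ_Lop t : VJ t -> forall q, exists N0, forall N, (N0 <= N)%N -> VJ (Lop N q t).
Proof.
elim=> [u [[qs Mu]|Ju] q||a b _ Ha _ Hb q|c a _ Ha q].
- have [N0 HS] := Lstable_LMono Mu q; exists N0 => N le_N.
  have V0 : VJ (Lop N0 q u).
    apply: span_gen; left; exists (q :: qs); apply: LMonoS Mu _.
    by exists N0 => N' le_N'; apply/Jspan_InJ/Jspan_sym/HS.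
  exact: VJ_Jeq' V0 (HS N le_N).
- by exists 0%N => N _; apply/VJ_Jspan/Jspan_Lop/span_gen.
- by exists 0%N => N _; rewrite Lop_vzero; apply: span0.
- have [Na HA] := Ha q; have [Nb HB] := Hb q.
  exists (maxn Na Nb) => N le_N; rewrite Lop_vadd; apply: spanD.
    by apply: HA; apply: leq_trans (leq_maxl _ _) le_N.
  by apply: HB; apply: leq_trans (leq_maxr _ _) le_N.
- have [Na HA] := Ha q; exists Na => N le_N.
  by rewrite Lop_vscal; apply/spanZ/HA.
Qed.

Lemma Jspan_unit_drop (u : word) Y : valid_word u -> valid_word Y ->
  Jspan (fun w => delta (u ++ None :: Y) w - delta (u ++ Y) w).
Proof.
elim: Y u => [|y Y IH] u vu vY.
  by apply: span_gen; right; right; exists u; split => // w; rewrite cats1 cats0.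
move: vY => /= /andP[vy vY].
have J1 := @Jspan_comm d r u None y Y vu isT vy vY.
have J2 := IH (rcons u y) (ltac:(by rewrite /valid_word all_rcons vy)) vY.
rewrite !cat_rcons in J2.
by apply: span_eq (span_add J1 J2) _ => w /=; rewrite /brr /= lin_nil /vzero; ring.
Qed.

Lemma Bplus_valid g : in_Bplus g -> validg g.
Proof. by case: g => [[[[i j] m] n]|] //= /andP[]. Qed.

Lemma wspan_le_mono k k' t : (k <= k')%N -> wspan_le k t -> wspan_le k' t.
Proof.
move=> le_k; apply: span_trans => u [w [vw le_w ->]]; apply: span_gen; exists w; split => //.
exact: leq_trans le_w le_k.
Qed.

Lemma wspan_le_lmulg k y t : validg y -> wspan_le k t -> wspan_le k.+1 (lmulg y t).
Proof.
move=> vy; elim=> [u [w [vw le_w ->]]||a b _ + _|c a _].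
- by rewrite lmulg_delta; apply: span_gen; exists (y :: w); rewrite /= vy.
- by rewrite lmulg_vzero; apply: span0.
- by rewrite lmulg_vadd; apply: spanD.
- by rewrite lmulg_vscal; apply: spanZ.
Qed.

(* Commuting [b] in [B_+] to the right, where it kills [1], leaves brackets only. *)
Lemma Bplus_lowers Y (b : gen) : valid_word Y -> in_Bplus b ->
  exists2 f, wspan_le (size Y) f & Jspan (fun w => delta (b :: Y) w - f w).
Proof.
elim: Y => [|y Y IH] vY Bb.
  exists vzero; first exact: span0.
  by apply: span_gen; right; left; exists [::], b; split => // w; rewrite /vzero subr0.
move: vY => /= /andP[vy vY]; have [f wf Jbf] := IH vY Bb.
exists (vadd (lmulg y f) (lin [::] (brr r b y) Y)).
  apply: spanD; first exact: wspan_le_lmulg.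
  rewrite lin_nilE; apply: span_sum => p ps; apply: span_gen; exists (p.2 :: Y).
  by rewrite /= vY andbT; split=> //; move/allP: (brr_valid r b y); apply; exact: map_f.
have J1 := @Jspan_comm d r [::] b y Y isT (Bplus_valid Bb) vy vY.
have J2 := Jspan_lmulg vy Jbf.
rewrite (_ : lmulg y _ = fun w => delta (y :: b :: Y) w - lmulg y f w) in J2; last first.
  apply: functional_extensionality => -[|z w] /=; first by rewrite subr0.
  by rewrite delta_cons; case: ifP; rewrite ?subr0.
by apply: span_eq (span_add J1 J2) _ => w /=; rewrite /vadd; ring.
Qed.

Lemma Bplus1_lowers A Y : all (@in_Bplus1 d) (letters A) -> valid_word Y ->
  exists2 f, wspan_le (size Y) f & Jspan (fun w => lin [::] A Y w - f w).
Proof.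
elim: A => [|a A IH] /= hA vY.
  by exists vzero; [exact: span0 | rewrite lin_nil; apply: span_eq (span0 _) _ => w; rewrite subr0].
move: hA => /andP[ha hA]; have [f wf Jf] := IH hA vY.
have [fa wfa Jfa] : exists2 fa, wspan_le (size Y) fa & Jspan (fun w => delta (a.2 :: Y) w - fa w).
  move: ha; rewrite /in_Bplus1 => /orP[/eqP ->|Ba]; last exact: Bplus_lowers.
  exists (delta Y); first by apply: span_gen; exists Y.
  exact: (@Jspan_unit_drop [::] Y isT vY).
exists (vadd (vscal a.1 fa) f); first exact/spanD/wf/spanZ.
apply: span_eq (span_add (span_scale a.1 Jfa) Jf) _ => w.
by rewrite /vadd /vscal /lin big_cons /=; ring.
Qed.

End Lowering.

Section Prefixes.
Variables (d : nat) (r : CC).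
Local Notation vec := (vec d).
Local Notation gen := (gen d).
Local Notation word := (word d).
Local Notation Jspan := (Jspan r).
Local Notation VJ := (VJ r).
Implicit Types (g : gen) (w Y : word) (s A B : seq (CC * gen)) (t : vec).

Definition VJ_upto k : Prop :=
  forall w, valid_word w -> (size w <= k)%N -> VJ (delta w).

Definition VJ_prefix k s : Prop :=
  forall Y, valid_word Y -> (size Y <= k)%N -> VJ (lin [::] s Y).

Lemma VJ_wspan_le k t : VJ_upto k -> wspan_le k t -> VJ t.
Proof. by move=> Vk; apply: span_trans => u [w [vw le_w ->]]; apply: Vk. Qed.

Lemma VJ_prefix_Bplus1 k s : VJ_upto k -> all (@in_Bplus1 d) (letters s) -> VJ_prefix k s.
Proof.
move=> Vk Bs Y vY le_Y; have [f wf Jf] := Bplus1_lowers r Bs vY.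
exact: VJ_Jeq' (VJ_wspan_le Vk (wspan_le_mono le_Y wf)) Jf.
Qed.

Lemma VJ_prefix_cat k s1 s2 : VJ_prefix k s1 -> VJ_prefix k s2 -> VJ_prefix k (s1 ++ s2).
Proof. by move=> V1 V2 Y vY le_Y; rewrite lin_cat; apply: spanD; [apply: V1|apply: V2]. Qed.

Lemma VJ_prefix_scl k c s : VJ_prefix k s -> VJ_prefix k (scl c s).
Proof. by move=> V Y vY le_Y; rewrite lin_scl; apply/spanZ/V. Qed.

Lemma VJ_prefix_ext k s s' :
  VJ_prefix k s -> (forall Y, lin [::] s Y = lin [::] s' Y) -> VJ_prefix k s'.
Proof. by move=> V e Y vY le_Y; rewrite -e; apply: V. Qed.

Lemma VJ_prefix_one k c g : c != 0 -> VJ_prefix k [:: (c, g)] -> VJ_prefix k [:: (1, g)].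
Proof.
by move=> c_neq0 /(VJ_prefix_scl c^-1) V; apply: VJ_prefix_ext V _ => Y; rewrite /scl /= mulVf.
Qed.

Lemma VJ_prefix_lmul k s t : VJ_prefix k s -> wspan_le k t -> VJ (lmul s t).
Proof.
move=> Vs; elim=> [u [w [vw le_w ->]]||a b _ + _|c a _].
- by rewrite lmul_delta; apply: Vs.
- by rewrite lmul_vzero; apply: span0.
- by rewrite lmul_vadd; apply: spanD.
- by rewrite lmul_vscal; apply: spanZ.
Qed.

Definition lin_br1 A g Y : vec := fun w => \sum_(a <- A) a.1 * lin [::] (brr r a.2 g) Y w.

Definition lin_br A B Y : vec := fun w => \sum_(b <- B) b.1 * lin_br1 A b.2 Y w.

Lemma Jspan_lmul_comm A B Y :
  all (@validg d) (letters A) -> all (@validg d) (letters B) -> valid_word Y ->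
  Jspan (fun w => lmul A (lin [::] B Y) w - lmul B (lin [::] A Y) w - lin_br A B Y w).
Proof.
move=> /allP vA /allP vB vY.
have J : Jspan (fun w => \sum_(a <- A) a.1 * (fun w => \sum_(b <- B) b.1 *
   (fun w => delta (a.2 :: b.2 :: Y) w - delta (b.2 :: a.2 :: Y) w
             - lin [::] (brr r a.2 b.2) Y w) w) w).
  apply: span_sum => a aA; apply: span_sum => b bB.
  by apply: (@Jspan_comm d r [::] a.2 b.2 Y isT) => //; [apply: vA | apply: vB]; apply: map_f.
apply: span_eq J _ => w /=.
have E1 : lmul A (lin [::] B Y) w = \sum_(a <- A) \sum_(b <- B) a.1 * b.1 * delta (a.2 :: b.2 :: Y) w.
  rewrite /lmul; apply: eq_bigr => a _; rewrite lmulg_lin /lin mulr_sumr.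
  by apply: eq_bigr => b _; rewrite mulrA.
have E2 : lmul B (lin [::] A Y) w = \sum_(a <- A) \sum_(b <- B) a.1 * b.1 * delta (b.2 :: a.2 :: Y) w.
  rewrite /lmul exchange_big /=; apply: eq_bigr => b _; rewrite lmulg_lin /lin mulr_sumr.
  by apply: eq_bigr => a _ /=; rewrite mulrA [b.1 * a.1]mulrC.
have E3 : lin_br A B Y w = \sum_(a <- A) \sum_(b <- B) a.1 * b.1 * lin [::] (brr r a.2 b.2) Y w.
  rewrite /lin_br /lin_br1 exchange_big /=; apply: eq_bigr => b _; rewrite mulr_sumr.
  by apply: eq_bigr => a _ /=; rewrite mulrA [b.1 * a.1]mulrC.
rewrite E1 E2 E3 -!sumrB; apply: eq_bigr => a _; rewrite -!sumrB mulr_sumr.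
by apply: eq_bigr => b _; ring.
Qed.

(* [L(0) s Y] lies in [VJ] by [VJ_Lop], and [s L(0) Y] does because [L(0)] lowers [Y] to
   shorter words; their difference is the bracket. *)
Lemma VJ_prefix_bracket k (i j : 'I_d) s s' :
  VJ_upto k -> all (@validg d) (letters s) -> VJ_prefix k s ->
  (exists N1, forall N, (N1 <= N)%N -> forall Y, lin_br (Lterms N (i, j, 0)) s Y = lin [::] s' Y) ->
  VJ_prefix k s'.
Proof.
move=> Vk vs Vs [N1 HN1] Y vY le_Y.
have [N0 HN0] := VJ_Lop (Vs Y vY le_Y) (i, j, 0).
pose N := maxn N0 N1.
have V1 := HN0 N (leq_maxl _ _); rewrite Lop_lmul in V1.
have [f wf Jf] := Bplus1_lowers r (Lterms0_Bplus1 N i j) vY.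
have J2 := Jspan_lmul vs Jf; rewrite lmul_sub in J2.
have V2 := VJ_Jeq' (VJ_prefix_lmul Vs (wspan_le_mono le_Y wf)) J2.
have V3 := VJ_Jeq (span_sub V1 V2) (Jspan_lmul_comm (Lterms_valid N (i, j, 0)) vs vY).
by rewrite -(HN1 N (leq_maxr _ _) Y).
Qed.

End Prefixes.

Section LzeroBrackets.
Variables (d : nat) (r : CC).
Local Notation vec := (vec d).
Local Notation gen := (gen d).
Local Notation word := (word d).
Local Notation vzero := (@vzero word CC).
Local Notation lin_br1 := (lin_br1 r).
Implicit Types (g : gen) (w Y : word) (s A B : seq (CC * gen)) (v : vec).

Definition vif (b : bool) v : vec := if b then v else vzero.

Definition vdiag (c : 'I_d) (x y : int) : gen :=
  if x <= y then Some (c, c, x, y) else Some (c, c, y, x).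

Lemma vdiag_le c (x y : int) : x <= y -> vdiag c x y = Some (c, c, x, y).
Proof. by rewrite /vdiag => ->. Qed.

Lemma vdiag_ge c (x y : int) : x <= y -> vdiag c y x = Some (c, c, x, y).
Proof. by rewrite /vdiag => le_xy; case: ifP => // le_yx; rewrite (_ : x = y) //; lia. Qed.

Lemma vnorm_neg (c : 'I_d) (x y : int) : x < 0 -> y < 0 -> vnorm c c x y = [:: (1, vdiag c x y)].
Proof.
move=> x_lt0 y_lt0; rewrite /vdiag; case: (lerP x y) => le_xy; first by rewrite vnorm_le.
by rewrite vnorm_gtn // (_ : (x + y == 0) = false) //; lia.
Qed.

Lemma lin_brr_neg c (e : 'I_d) (x y : int) Y : x < 0 -> y < 0 ->
  lin [::] (map (fun p => if p.2 is None then (r * p.1, None) else p) (scl c (vnorm e e x y))) Y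
  = vscal c (delta (vdiag e x y :: Y)).
Proof.
by move=> x_lt0 y_lt0; rewrite vnorm_neg //= /vdiag; case: ifP => _; rewrite lin_one mulr1.
Qed.

Lemma lin_br1_cons p A g Y :
  lin_br1 (p :: A) g Y = vadd (vscal p.1 (lin [::] (brr r p.2 g) Y)) (lin_br1 A g Y).
Proof. by apply: functional_extensionality => w; rewrite /lin_br1 big_cons. Qed.

Lemma lin_br1_nil g Y : lin_br1 [::] g Y = vzero.
Proof. by apply: functional_extensionality => w; rewrite /lin_br1 big_nil. Qed.

Lemma lin_br1_cat A B g Y : lin_br1 (A ++ B) g Y = vadd (lin_br1 A g Y) (lin_br1 B g Y).
Proof. by apply: functional_extensionality => w; rewrite /lin_br1 big_cat. Qed.

Lemma lin_br1_Lterms q g Y (F : nat -> vec) N :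
  lin_br1 (Lbase q) g Y = vzero -> (forall n, lin_br1 (Lstep n q) g Y = F n) ->
  lin_br1 (Lterms N q) g Y = fun w => \sum_(n < N) F n w.
Proof.
move=> base step; elim: N => [|N IH] /=.
  by rewrite base; apply: functional_extensionality => w; rewrite big_ord0.
rewrite lin_br1_cat IH step; apply: functional_extensionality => w.
by rewrite big_ord_recr.
Qed.

Lemma sum_vif_neg (a : int) v N w : a < 0 ->
  \sum_(n < N) vif ((n.+1)%:Z + a == 0) v w = vif (absz a <= N)%N v w.
Proof.
move=> a_lt0; elim: N => [|N IH]; rewrite ?big_ord0 ?big_ord_recr ?IH /vif /=.
  by case: ifP => //; lia.
by do 3 case: ifP; rewrite /vzero ?addr0 ?add0r //; lia.
Qed.

Lemma lin_br1_Lkk0_mixed (k l : 'I_d) (a b : int) Y N : (k < l)%N -> a < 0 -> b < 0 ->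
  lin_br1 (Lterms N (k, k, 0)) (Some (k, l, a, b)) Y
  = vif (absz a <= N)%N (vscal (- a%:~R) (delta (Some (k, l, a, b) :: Y))).
Proof.
move=> lt_kl a_lt0 b_lt0.
set v := vscal _ _.
rewrite (lin_br1_Lterms (F := fun n => vif ((n.+1)%:Z + a == 0) v)) => [||n].
- by apply: functional_extensionality => w; rewrite sum_vif_neg.
- rewrite /Lbase eqxx /= vnorm_le // /= lin_br1_cons lin_br1_nil.
  rewrite /brr /rawbr /= eqxx (ord_ltn_eqF lt_kl) (_ : (0 + a == 0) = false) /=; last lia.
  by apply: functional_extensionality => w; rewrite /vadd /vscal /vzero /lin big_nil; ring.
rewrite /Lstep eqxx /= vnorm_le; last lia.
rewrite lin_br1_cons lin_br1_nil.
rewrite /brr /rawbr /= eqxx (ord_ltn_eqF lt_kl) (_ : (- (n.+1)%:Z + a == 0) = false) /=; last lia.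
rewrite /vif; case: eqP => [e|_]; last first.
  by apply: functional_extensionality => w; rewrite /vadd /vscal /vzero /lin big_nil; ring.
rewrite /v (_ : a = - (n.+1)%:Z); last lia.
rewrite vnorm_lt //= lin_one; apply: functional_extensionality => w.
by rewrite /vadd /vscal /vzero intrN opprK; ring.
Qed.

Lemma lin_condl f c s Y :
  lin [::] (map f (condl c s)) Y = vif c (lin [::] (map f s) Y).
Proof. by case: c; rewrite /= ?lin_nil. Qed.

Lemma rawbr_mixed (k l : 'I_d) (x y a b : int) : (k < l)%N ->
  rawbr (Some (k, l, x, y)) (Some (k, l, a, b))
  = condl (y + b == 0) (scl y%:~R (vnorm k k x a)) ++ condl (x + a == 0) (scl x%:~R (vnorm l l b y)).
Proof. by move=> lt_kl; rewrite /rawbr (ord_ltn_eqF lt_kl) (ord_gtn_eqF lt_kl) !eqxx /= cats0. Qed.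

Lemma lin_br1_Lkl0_mixed_step (k l : 'I_d) (a b : int) Y n : (k < l)%N -> a < 0 -> b < 0 ->
  lin_br1 (Lstep n (k, l, 0)) (Some (k, l, a, b)) Y
  = vadd (vif ((n.+1)%:Z + a == 0) (vscal (2^-1 * - a%:~R) (delta (vdiag l b a :: Y))))
         (vif ((n.+1)%:Z + b == 0) (vscal (2^-1 * - b%:~R) (delta (vdiag k b a :: Y)))).
Proof.
move=> lt_kl a_lt0 b_lt0.
rewrite /Lstep (ord_ltn_eqF lt_kl) andFb !vnorm_lt // cat1s /scl /= !lin_br1_cons lin_br1_nil /=.
have cond1 : (- (n.+1)%:Z + b == 0) = false by lia.
have cond2 : (0 - (n.+1)%:Z + a == 0) = false by lia.
rewrite /brr !(rawbr_mixed _ _ _ _ lt_kl) cond1 cond2 /= !cats0 !lin_condl.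
have n_lt0 : - (n.+1)%:Z < 0 by lia.
rewrite !add0r (lin_brr_neg _ _ _ b_lt0 n_lt0) (lin_brr_neg _ _ _ n_lt0 a_lt0).
apply: functional_extensionality => w; rewrite /vadd /vscal /vif /vzero.
case: (n.+1%:Z + a =P 0) => ea; case: (n.+1%:Z + b =P 0) => eb;
  try (have {}ea : a = - (n.+1)%:Z by lia); try (have {}eb : b = - (n.+1)%:Z by lia);
  try subst a; try subst b; rewrite ?intrN ?opprK; ring.
Qed.

Lemma lin_br1_Lkl0_mixed (k l : 'I_d) (a b : int) Y N : (k < l)%N -> a < 0 -> b < 0 ->
  lin_br1 (Lterms N (k, l, 0)) (Some (k, l, a, b)) Y
  = vadd (vif (absz a <= N)%N (vscal (2^-1 * - a%:~R) (delta (vdiag l b a :: Y))))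
         (vif (absz b <= N)%N (vscal (2^-1 * - b%:~R) (delta (vdiag k b a :: Y)))).
Proof.
move=> lt_kl a_lt0 b_lt0; set va := vscal _ _; set vb := vscal _ _.
rewrite (lin_br1_Lterms
  (F := fun n => vadd (vif ((n.+1)%:Z + a == 0) va) (vif ((n.+1)%:Z + b == 0) vb))) => [||n].
- by apply: functional_extensionality => w; rewrite /vadd big_split !sum_vif_neg.
- rewrite /Lbase (ord_ltn_eqF lt_kl) andFb (vnorm_lt _ _ lt_kl) /scl /= lin_br1_cons lin_br1_nil.
  have [a_neq0 b_neq0] : (a == 0) = false /\ (b == 0) = false by split; lia.
  rewrite /brr (rawbr_mixed _ _ _ _ lt_kl) !add0r map_cat lin_cat !lin_condl a_neq0 b_neq0.
  by apply: functional_extensionality => w; rewrite /vadd /vscal /vzero; ring.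
- by rewrite /va /vb lin_br1_Lkl0_mixed_step.
Qed.

Lemma lin_br1_Ljj0_other (j k : 'I_d) (c e : int) Y N : j != k ->
  lin_br1 (Lterms N (j, j, 0)) (Some (k, k, c, e)) Y = vzero.
Proof.
move=> /negbTE ne_jk.
have brr0 : forall x y, brr r (Some (j, j, x, y)) (Some (k, k, c, e)) = [::].
  by move=> x y; rewrite /brr /rawbr ne_jk.
rewrite (lin_br1_Lterms (F := fun=> vzero)) => [||n].
- by apply: functional_extensionality => w; rewrite big1.
- rewrite /Lbase eqxx (vnorm_le _ (lexx 0)) /scl /= lin_br1_cons lin_br1_nil brr0.
  by apply: functional_extensionality => w; rewrite /vadd /vscal /vzero /lin big_nil; ring.
- rewrite /Lstep eqxx vnorm_le ?lin_br1_cons ?lin_br1_nil ?brr0; last lia.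
  by apply: functional_extensionality => w; rewrite /vadd /vscal /vzero /lin big_nil; ring.
Qed.

Lemma rawbr_diag (k : 'I_d) (x y c e : int) :
  rawbr (Some (k, k, x, y)) (Some (k, k, c, e))
  = condl (y + c == 0) (scl y%:~R (vnorm k k x e)) ++ condl (y + e == 0) (scl y%:~R (vnorm k k x c))
    ++ condl (x + c == 0) (scl x%:~R (vnorm k k e y)) ++ condl (x + e == 0) (scl x%:~R (vnorm k k c y)).
Proof. by rewrite /rawbr !eqxx. Qed.

Lemma lin_br1_Lkk0_diag (k : 'I_d) (c e : int) Y N : c <= e -> e < 0 ->
  lin_br1 (Lterms N (k, k, 0)) (Some (k, k, c, e)) Y
  = vadd (vif (absz c <= N)%N (vscal (- c%:~R) (delta (Some (k, k, c, e) :: Y))))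
         (vif (absz e <= N)%N (vscal (- e%:~R) (delta (Some (k, k, c, e) :: Y)))).
Proof.
move=> le_ce e_lt0; have c_lt0 : c < 0 by lia.
set vc := vscal _ _; set ve := vscal _ _.
rewrite (lin_br1_Lterms
  (F := fun n => vadd (vif ((n.+1)%:Z + c == 0) vc) (vif ((n.+1)%:Z + e == 0) ve))) => [||n].
- by apply: functional_extensionality => w; rewrite /vadd big_split !sum_vif_neg.
- rewrite /Lbase eqxx (vnorm_le _ (lexx 0)) /scl /= lin_br1_cons lin_br1_nil.
  have [c_neq0 e_neq0] : (c == 0) = false /\ (e == 0) = false by split; lia.
  rewrite /brr rawbr_diag !add0r !map_cat !lin_cat !lin_condl c_neq0 e_neq0.
  by apply: functional_extensionality => w; rewrite /vadd /vscal /vzero; ring.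
have n_lt0 : - (n.+1)%:Z < 0 by lia.
have [nc_neq0 ne_neq0] : (- (n.+1)%:Z + c == 0) = false /\ (- (n.+1)%:Z + e == 0) = false.
  by split; lia.
rewrite /Lstep eqxx (vnorm_le _ (_ : - (n.+1)%:Z <= (n.+1)%:Z)) /scl /=; last lia.
rewrite lin_br1_cons lin_br1_nil /brr rawbr_diag !map_cat !lin_cat !lin_condl nc_neq0 ne_neq0.
rewrite (lin_brr_neg _ _ _ n_lt0 e_lt0) (lin_brr_neg _ _ _ n_lt0 c_lt0).
apply: functional_extensionality => w; rewrite /vc /ve /vadd /vscal /vif /vzero mul1r.
case: (n.+1%:Z + c =P 0) => ec; case: (n.+1%:Z + e =P 0) => ee;
  try (have {}ec : c = - (n.+1)%:Z by lia); try (have {}ee : e = - (n.+1)%:Z by lia);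
  try subst c; try subst e; rewrite ?(vdiag_le _ le_ce) ?(vdiag_ge _ le_ce) ?intrN ?opprK; ring.
Qed.

End LzeroBrackets.

Lemma intr_neq0_CC (a : int) : a != 0 -> a%:~R != 0 :> CC.
Proof. by move=> a_neq0; have : a%:~R != 0 :> (Rdefinitions.R)[i] by rewrite intr_eq0. Qed.

Lemma two_neq0_CC : (2 : CC) != 0.
Proof. by have : (2%:R : (Rdefinitions.R)[i]) != 0 by rewrite pnatr_eq0. Qed.

Section MixedLetters.
Variables (d : nat) (r : CC).
Local Notation gen := (gen d).
Local Notation word := (word d).
Local Notation VJ := (VJ r).
Local Notation VJ_upto := (@VJ_upto d r).
Local Notation VJ_prefix := (VJ_prefix r).
Implicit Types (g : gen) (w Y : word) (s : seq (CC * gen)).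

Definition vneg (k l : 'I_d) (m : int) (j : nat) : gen := Some (k, l, m + (j.+1)%:Z, - (j.+1)%:Z).

(* The terms of [L_r^{kl}(m)] whose two modes are both negative. *)
Definition Lneg (k l : 'I_d) (m : int) (N : nat) : seq (CC * gen) :=
  [seq (2^-1, vneg k l m j) | j <- iota 0 N].

Lemma LnegS k l m N : Lneg k l m N.+1 = Lneg k l m N ++ [:: (2^-1, vneg k l m N)].
Proof. by rewrite /Lneg -[N.+1]addn1 iotaD map_cat. Qed.

Lemma VJ_Lterms_Lneg k (k1 l1 : 'I_d) (m : int) Y N : VJ_upto k -> (k1 < l1)%N -> m < 0 ->
  valid_word Y -> (size Y <= k)%N ->
  VJ (fun w => lin [::] (Lterms N (k1, l1, m)) Y w
               - lin [::] (Lneg k1 l1 m (minn N (absz m).-1)) Y w).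
Proof.
move=> Vk lt_kl m_lt0 vY le_Y.
have gen_q : ~~ ((k1 == l1) && (m == 0)) by rewrite ord_ltn_eqF.
have Bplus : forall x y : int, (0 <= x) || (0 <= y) ->
    VJ (lin [::] [:: (2^-1 * 1, Some (k1, l1, x, y))] Y).
  move=> x y xy_ge0; apply: (VJ_prefix_Bplus1 Vk) vY le_Y.
  by rewrite /= /in_Bplus1 /in_Bplus /= lt_kl xy_ge0.
elim: N => [|N IH].
  rewrite Lterms0 Lbase_generic // min0n (vnorm_lt _ _ lt_kl) /Lneg /= lin_nil.
  have V := Bplus m 0 (ltac:(lia)).
  by apply: span_eq V _ => w; rewrite /vzero subr0.
rewrite LtermsS lin_cat Lstep_generic // !(vnorm_lt _ _ lt_kl) /scl /=.
case: (ltnP N (absz m).-1) => lt_N.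
  rewrite (_ : minn N.+1 _ = (minn N (absz m).-1).+1) ?LnegS ?lin_cat; last by lia.
  rewrite (_ : minn N _ = N) in IH *; last by lia.
  have V := Bplus (m - (N.+1)%:Z) (N.+1)%:Z (ltac:(lia)).
  apply: span_eq (span_add IH V) _ => w; rewrite /vadd lin_two /vneg mulr1; ring.
rewrite (_ : minn N.+1 _ = minn N (absz m).-1); last by lia.
have V1 := Bplus (m + (N.+1)%:Z) (- (N.+1)%:Z) (ltac:(lia)).
have V2 := Bplus (m - (N.+1)%:Z) (N.+1)%:Z (ltac:(lia)).
by apply: span_eq (span_add IH (span_add V1 V2)) _ => w; rewrite /vadd lin_two; ring.
Qed.

Lemma VJ_prefix_Lneg k (k1 l1 : 'I_d) (m : int) : VJ_upto k -> (k1 < l1)%N -> m < 0 ->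
  VJ_prefix k (Lneg k1 l1 m (absz m).-1).
Proof.
move=> Vk lt_kl m_lt0 Y vY le_Y.
have [N0 HN0] := VJ_Lop (Vk Y vY le_Y) (k1, l1, m).
pose N := maxn N0 (absz m).-1.
have V := HN0 N (leq_maxl _ _); rewrite Lop_lmul lmul_delta in V.
have V' := VJ_Lterms_Lneg N Vk lt_kl m_lt0 vY le_Y.
rewrite (_ : minn N _ = (absz m).-1) in V'; last by lia.
by apply: span_eq (span_sub V V') _ => w; ring.
Qed.

Definition mode1 g : int := if g is Some (_, _, x, _) then x else 0.

Definition neg_mixed (k l : 'I_d) g : bool :=
  if g is Some (i, j, x, y) then [&& i == k, j == l, x < 0 & y < 0] else false.

Definition reweight (f : gen -> CC) s : seq (CC * gen) := [seq (p.1 * f p.2, p.2) | p <- s].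

Lemma lin_reweight f s Y w :
  lin [::] (reweight f s) Y w = \sum_(p <- s) p.1 * f p.2 * delta (p.2 :: Y) w.
Proof. by rewrite /lin /reweight big_map. Qed.

Lemma letters_reweight f s : letters (reweight f s) = letters s.
Proof. by rewrite /reweight -map_comp. Qed.

(* Bracketing with [L^{kk}(0)] multiplies the coefficient of [v^{kl}(x, y)] by [-x]. *)
Lemma VJ_prefix_Lkk0 k (k1 l1 : 'I_d) s : VJ_upto k -> (k1 < l1)%N ->
  all (neg_mixed k1 l1) (letters s) -> VJ_prefix k s ->
  VJ_prefix k (reweight (fun g => - (mode1 g)%:~R) s).
Proof.
move=> Vk lt_kl /allP negs Vs.
apply: (VJ_prefix_bracket (i := k1) (j := k1) Vk _ Vs).
  apply/allP => g /negs; case: g => [[[[i j] x] y]|] //= /and4P[/eqP -> /eqP -> _ _].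
  by rewrite lt_kl.
exists (\max_(p <- s) absz (mode1 p.2)) => N le_N Y.
apply: functional_extensionality => w; rewrite /lin_br lin_reweight; apply: eq_big_seq => p ps.
have := negs _ (map_f _ ps).
case: p ps => c [[[[i j] x] y]|] ps //= /and4P[/eqP -> /eqP -> x_lt0 y_lt0].
rewrite lin_br1_Lkk0_mixed // /vif ifT; last first.
  apply: leq_trans le_N.
  exact: (@leq_bigmax_seq _ s predT (fun p : CC * gen => absz (mode1 p.2)) _ ps isT).
by rewrite /vscal mulrA.
Qed.

Lemma VJ_prefix_poly k (k1 l1 : 'I_d) s (A : seq int) : VJ_upto k -> (k1 < l1)%N ->
  all (neg_mixed k1 l1) (letters s) -> VJ_prefix k s ->
  VJ_prefix k (reweight (fun g => \prod_(x <- A) (x%:~R - (mode1 g)%:~R)) s).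
Proof.
move=> Vk lt_kl negs Vs; elim: A => [|x A IH].
  apply: VJ_prefix_ext Vs _ => Y; apply: functional_extensionality => w.
  by rewrite lin_reweight /lin; apply: eq_bigr => p _; rewrite big_nil mulr1.
rewrite -(letters_reweight (fun g => \prod_(x <- A) (x%:~R - (mode1 g)%:~R))) in negs.
have V := VJ_prefix_cat (VJ_prefix_Lkk0 Vk lt_kl negs IH) (VJ_prefix_scl x%:~R IH).
apply: VJ_prefix_ext V _ => Y; apply: functional_extensionality => w.
rewrite lin_cat lin_scl /vadd /vscal !lin_reweight /reweight big_map mulr_sumr -big_split /=.
by apply: eq_bigr => p _; rewrite big_cons; ring.
Qed.

Lemma neg_mixed_Lneg (k l : 'I_d) (m : int) : m < 0 ->
  all (neg_mixed k l) (letters (Lneg k l m (absz m).-1)).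
Proof.
move=> m_lt0; apply/allP => g /mapP [p /mapP [j j_in ->] ->] /=.
by rewrite mem_iota in j_in; rewrite /vneg /= !eqxx /=; apply/andP; split; lia.
Qed.

Definition other_modes (a b : int) : seq int :=
  [seq a + b + (j.+1)%:Z | j <- iota 0 (absz (a + b)).-1 & j != (absz b).-1].

(* The product over [other_modes a b] vanishes at the first mode of every term of
   [Lneg k l (a + b)] except [v^{kl}(a, b)]. *)
Lemma lin_Lneg_interpolate (k l : 'I_d) (a b : int) Y : a < 0 -> b < 0 ->
  let A := other_modes a b in
  lin [::] (reweight (fun g => \prod_(x <- A) (x%:~R - (mode1 g)%:~R))
             (Lneg k l (a + b) (absz (a + b)).-1)) Y
  = lin [::] [:: (2^-1 * \prod_(x <- A) (x%:~R - a%:~R), Some (k, l, a, b))] Y.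
Proof.
move=> a_lt0 b_lt0 A; apply: functional_extensionality => w.
rewrite lin_reweight /Lneg big_map lin_one /vscal.
rewrite (bigD1_seq (absz b).-1) /=; [|by rewrite mem_iota; lia|exact: iota_uniq].
rewrite [X in _ + X]big1_seq ?addr0.
  rewrite (_ : vneg k l (a + b) (absz b).-1 = Some (k, l, a, b)); last first.
    by rewrite /vneg; congr (Some (_, _, _, _)); lia.
  by rewrite /= (_ : a + b + ((absz b).-1.+1)%:Z = a) //; lia.
move=> j /andP[ne_j j_in]; rewrite mem_iota in j_in.
rewrite (_ : \prod_(x <- A) _ = 0) ?mulr0 ?mul0r //.
apply/eqP; rewrite prodf_seq_eq0; apply/hasP; exists (a + b + (j.+1)%:Z).
  by apply: map_f; rewrite mem_filter ne_j mem_iota.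
by rewrite /= subrr.
Qed.

Lemma VJ_prefix_mixed k (k1 l1 : 'I_d) a b : VJ_upto k -> (k1 < l1)%N -> a < 0 -> b < 0 ->
  VJ_prefix k [:: (1, Some (k1, l1, a, b))].
Proof.
move=> Vk lt_kl a_lt0 b_lt0.
have ab_lt0 : a + b < 0 by lia.
have V := VJ_prefix_poly (other_modes a b) Vk lt_kl (neg_mixed_Lneg k1 l1 ab_lt0)
  (VJ_prefix_Lneg Vk lt_kl ab_lt0).
apply: (VJ_prefix_one (c := 2^-1 * \prod_(x <- other_modes a b) (x%:~R - a%:~R))).
  rewrite mulf_neq0 ?invr_eq0 ?two_neq0_CC // prodf_seq_neq0.
  apply/allP => x /mapP [j]; rewrite mem_filter mem_iota => /andP [ne_j j_in] -> /=.
  by rewrite -intrB; apply: intr_neq0_CC; lia.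
by apply: VJ_prefix_ext V _ => Y; apply: lin_Lneg_interpolate.
Qed.

End MixedLetters.

Section DiagonalLetters.
Variables (d : nat) (r : CC).
Local Notation VJ_upto := (@VJ_upto d r).
Local Notation VJ_prefix := (VJ_prefix r).

Lemma exists_partner (j : 'I_d) : (2 <= d)%N ->
  exists k1 l1 : 'I_d, (k1 < l1)%N /\ (j = k1 \/ j = l1).
Proof.
move=> d_ge2; have [d_gt0 d_gt1] : (0 < d)%N /\ (1 < d)%N by split; lia.
case: (j =P Ordinal d_gt0) => [->|ne_j0]; first by exists (Ordinal d_gt0), (Ordinal d_gt1); split => //; left.
exists (Ordinal d_gt0), j; split; last by right.
by rewrite /= lt0n; apply/eqP => j0; apply: ne_j0; apply: val_inj.
Qed.

Lemma VJ_prefix_diag_pair k (k1 l1 : 'I_d) (c e : int) : VJ_upto k -> (k1 < l1)%N ->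
  c <= e -> e < 0 ->
  VJ_prefix k [:: (2^-1 * - c%:~R, Some (l1, l1, c, e)); (2^-1 * - e%:~R, Some (k1, k1, c, e))].
Proof.
move=> Vk lt_kl le_ce e_lt0; have c_lt0 : c < 0 by lia.
apply: (VJ_prefix_bracket (i := k1) (j := l1) Vk _ (VJ_prefix_mixed Vk lt_kl c_lt0 e_lt0)).
  by rewrite /= lt_kl.
exists (absz c + absz e)%N => N le_N Y; apply: functional_extensionality => w.
have [le_cN le_eN] : (absz c <= N)%N /\ (absz e <= N)%N by split; lia.
rewrite /lin_br big_cons big_nil /= (lin_br1_Lkl0_mixed _ _ _ lt_kl c_lt0 e_lt0).
rewrite !(vdiag_ge _ le_ce) /vif le_cN le_eN.
by rewrite /vadd /vscal lin_two !lin_one /vscal mul1r addr0.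
Qed.

(* Bracketing with [L^{jj}(0)] keeps the [v^{jj}] term, scaled by [-(c + e)], and kills
   [v^{j'j'}]. *)
Lemma VJ_prefix_diag_select k (j j' : 'I_d) (cj cj' : CC) (c e : int) : VJ_upto k -> j != j' ->
  c <= e -> e < 0 ->
  VJ_prefix k [:: (cj, Some (j, j, c, e)); (cj', Some (j', j', c, e))] ->
  VJ_prefix k [:: (cj * (- c%:~R - e%:~R), Some (j, j, c, e))].
Proof.
move=> Vk ne_jj le_ce e_lt0 V.
apply: (VJ_prefix_bracket (i := j) (j := j) Vk _ V); first by rewrite /= !eqxx le_ce !orbT.
exists (absz c + absz e)%N => N le_N Y; apply: functional_extensionality => w.
have [le_cN le_eN] : (absz c <= N)%N /\ (absz e <= N)%N by split; lia.
rewrite /lin_br !big_cons big_nil /= (lin_br1_Lkk0_diag _ _ _ _ le_ce e_lt0).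
rewrite (lin_br1_Ljj0_other _ _ _ _ _ ne_jj) /vif le_cN le_eN.
by rewrite /vadd /vscal /vzero lin_one /vscal; ring.
Qed.

Lemma VJ_prefix_diag k (j : 'I_d) c e : VJ_upto k -> (2 <= d)%N -> c <= e -> e < 0 ->
  VJ_prefix k [:: (1, Some (j, j, c, e))].
Proof.
move=> Vk d_ge2 le_ce e_lt0.
have [k1 [l1 [lt_kl j_kl]]] := exists_partner j d_ge2.
have V := VJ_prefix_diag_pair Vk lt_kl le_ce e_lt0.
have ce_neq0 : (- c%:~R - e%:~R : CC) != 0.
  by rewrite -intrN -intrB; apply: intr_neq0_CC; lia.
have half_neq0 : (2^-1 : CC) != 0 by rewrite invr_eq0 two_neq0_CC.
case: j_kl => ->.
- have V' : VJ_prefix k [:: (2^-1 * - e%:~R, Some (k1, k1, c, e)); (2^-1 * - c%:~R, Some (l1, l1, c, e))].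
    by apply: VJ_prefix_ext V _ => Y; apply: functional_extensionality => w; rewrite !lin_two addrC.
  apply: VJ_prefix_one _ (VJ_prefix_diag_select Vk (negbT (ord_ltn_eqF lt_kl)) le_ce e_lt0 V').
  by rewrite !mulf_neq0 // -intrN; apply: intr_neq0_CC; lia.
- apply: VJ_prefix_one _ (VJ_prefix_diag_select Vk (negbT (ord_gtn_eqF lt_kl)) le_ce e_lt0 V).
  by rewrite !mulf_neq0 // -intrN; apply: intr_neq0_CC; lia.
Qed.

End DiagonalLetters.

Section AllWords.
Variables (d : nat) (r : CC).
Local Notation vec := (vec d).
Local Notation gen := (gen d).
Local Notation VJ := (VJ r).
Local Notation VJ_upto := (@VJ_upto d r).
Local Notation VJ_prefix := (VJ_prefix r).
Hypothesis d_ge2 : (2 <= d)%N.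
Implicit Types (x : gen) (t : vec).

Lemma VJ_prefix_gen k x : VJ_upto k -> validg x -> VJ_prefix k [:: (1, x)].
Proof.
move=> Vk; case: x => [[[[i j] a] b]|] vx; last by apply: VJ_prefix_Bplus1.
case: (boolP ((0 <= a) || (0 <= b))) => [ab_ge0|].
  by apply: VJ_prefix_Bplus1 => //=; rewrite /in_Bplus1 /in_Bplus vx ab_ge0 orbT.
rewrite negb_or -!ltNge => /andP[a_lt0 b_lt0].
case/orP: vx => [lt_ij|/andP[/eqP <- le_ab]]; first exact: VJ_prefix_mixed.
exact: VJ_prefix_diag.
Qed.

Lemma VJ_delta_nil : VJ (delta (@nil gen)).
Proof.
apply: span_gen; left; exists [::]; apply: LMono0; apply: Jspan_InJ.
by apply: span_eq (span0 _) _ => w; rewrite /vzero subrr.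
Qed.

Lemma VJ_upto_all k : VJ_upto k.
Proof.
elim: k => [|k IH] [|x Y] //= vw le_w; try exact: VJ_delta_nil.
case/andP: vw => vx vY; have := VJ_prefix_gen IH vx vY le_w.
by rewrite lin_one => V; apply: span_eq V _ => w; rewrite /vscal mul1r.
Qed.

Lemma VJ_wspan t : wspan t -> VJ t.
Proof. by apply: span_trans => u [w [vw ->]]; apply: VJ_upto_all vw (leqnn _). Qed.

End AllWords.

Section Decomposition.
Variables (d : nat) (r : CC).
Local Notation vec := (vec d).
Local Notation word := (word d).
Local Notation vzero := (@vzero word CC).
Implicit Types (w : word) (t : vec).

Lemma vec_delta_expand t (s : seq word) w : (forall w, t w != 0 -> w \in s) ->
  t w = \sum_(u <- undup s) t u * delta u w.
Proof.
move=> supp_t; case: (boolP (w \in undup s)) => [w_in|w_notin].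
  rewrite (bigD1_seq w) ?undup_uniq //= /delta eqxx mulr1 big1_seq ?addr0 // => u /andP[ne_uw _].
  by rewrite eq_sym (negbTE ne_uw) mulr0.
rewrite big1_seq => [|u /andP[_ u_in]]; last first.
  by rewrite /delta; case: eqP => [e|_]; [subst; rewrite u_in in w_notin|rewrite mulr0].
by apply/eqP; apply: contraR w_notin => /supp_t; rewrite mem_undup.
Qed.

Lemma wspan_finsupp t (s : seq word) : (forall w, t w != 0 -> w \in s) ->
  (forall w, t w != 0 -> valid_word w) -> wspan t.
Proof.
move=> supp_t valid_t.
have W := span_sum (P := fun z => exists w, valid_word w /\ z = delta w) (s := undup s)
  (F := fun u => if t u != 0 then delta u else vzero) t.
apply: span_eq (W _) _ => [u _|w]; first by case: ifP => [/valid_t vu|_]; [apply: span_gen; exists u|apply: span0].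
rewrite (vec_delta_expand w supp_t); apply: eq_bigr => u _.
by case: ifP => // /negbFE/eqP ->; rewrite !mul0r.
Qed.

Lemma VJ_decompose t : VJ r t ->
  exists (n : nat) (qs : nat -> seq ('I_d * 'I_d * int)) (c : nat -> CC) (u : nat -> vec),
    (forall k, (k < n)%N -> LMono r (qs k) (u k)) /\
    InJ r (fun w => t w - \sum_(k < n) c k * u k w).
Proof.
case/span_or_split => a /span_lincomb [n [c [u [Mu e]]]] Ja.
have [qs Mqs] := fin_choice [::] Mu.
exists n, qs, c, u; split => //; apply: Jspan_InJ.
by apply: span_eq Ja _ => w; rewrite e.
Qed.

End Decomposition.

Theorem proposition3p1 (d : nat) (r : CC) :
  (2 <= d)%N ->
  forall t : vec d,
    (exists s : seq (word d), forall w, t w != 0 -> w \in s) ->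
    (forall w, t w != 0 -> valid_word w) ->
    exists (n : nat) (qs : nat -> seq ('I_d * 'I_d * int)) (c : nat -> CC) (u : nat -> vec d),
      (forall k, (k < n)%N -> LMono r (qs k) (u k)) /\
      InJ r (fun w => t w - \sum_(k < n) c k * u k w).
Proof.
move=> d_ge2 t [s supp_t] valid_t.
exact/VJ_decompose/(VJ_wspan r d_ge2)/(wspan_finsupp supp_t valid_t).
Qed.
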